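(* Let $\omega\ge 4$ be an integer and let $\Gamma$ be a connected finite simple graph. Then $C_\omega(L(\Gamma))\cong\Gamma$ if and only if $\Gamma$ is $\omega$-regular.
   Context: $L(\Gamma)$ is the line graph of $\Gamma$: its vertices are the edges of $\Gamma$, two being adjacent iff they share an endpoint. For a graph $H$ and an integer $\omega$, the $\omega$-clique graph $C_\omega(H)$ is the graph whose vertices are the cliques (vertex sets of complete subgraphs) of order exactly $\omega$ in $H$, two distinct such cliques being adjacent iff they have nonempty intersection. *)

From mathcomp Require Import all_boot.
Set Implicit Arguments. Unset Strict Implicit. Unset Printing Implicit Defensive.

Definition simple_graph (T : finType) (e : rel T) : Prop :=
  symmetric e /\ irreflexive e.

Definition connected_graph (T : finType) (e : rel T) : Prop :=
  forall x y : T, connect e x y.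

Definition regular (T : finType) (e : rel T) (k : nat) : Prop :=
  forall x : T, #|[set y | e x y]| = k.

Definition graph_iso (T1 T2 : finType) (e1 : rel T1) (e2 : rel T2) : Prop :=
  exists f : T1 -> T2, bijective f /\ forall x y, e2 (f x) (f y) = e1 x y.

Definition is_edge (T : finType) (e : rel T) (A : {set T}) : bool :=
  [exists x, exists y, e x y && (A == [set x; y])].

Definition line_vertex {T : finType} (e : rel T) := {A : {set T} | is_edge e A}.

Definition line_adj {T : finType} (e : rel T) : rel (line_vertex e) :=
  fun a b => (a != b) && (val a :&: val b != set0).

Definition is_clique (V : finType) (adj : rel V) (S : {set V}) : bool :=
  [forall x in S, forall y in S, (x != y) ==> adj x y].

Definition clique_vertex {V : finType} (adj : rel V) (w : nat) :=
  {S : {set V} | is_clique adj S && (#|S| == w)}.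

Definition clique_adj {V : finType} (adj : rel V) (w : nat)
  : rel (clique_vertex adj w) :=
  fun a b => (a != b) && (val a :&: val b != set0).

Arguments line_adj {T} e _ _.
Arguments clique_adj {V} adj w _ _.

From mathcomp Require Import all_boot zify.
Set Implicit Arguments. Unset Strict Implicit. Unset Printing Implicit Defensive.

(* Four or more pairwise meeting edges share a vertex, so for ω ≥ 4 the ω-cliques
   of L(Γ) are the ω-sets of edges through a common vertex, and two stars share
   at most one edge. Hence, for Γ ω-regular, v ↦ star(v) is an isomorphism from Γ
   onto C_ω(L(Γ)).
   Conversely, an isomorphism transports degrees. If a vertex u of maximal degree
   d had d ≥ ω + 2, an ω-subset K of star(u) would have the ω(d - ω) > d
   neighbours obtained by exchanging one edge of K. If deg v = ω + 1, the ω + 1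
   cliques star(v) minus one edge are pairwise adjacent, so their images form an
   (ω + 1)-clique Y of Γ. A vertex y of Y of degree ω + 1 would have two neighbours
   u1, u2 of degree ≥ ω, and then star(y) minus an edge avoiding yu1, yu2 would
   have ω + 2 neighbours: the ω cliques star(y) minus one edge, and an ω-clique
   of star(u_i) through yu_i for i = 1, 2. So every vertex of Y has its
   neighbourhood inside Y, Y is all of the connected graph Γ, and deg v = ω, a
   contradiction. Once all degrees are ≤ ω, the ω-cliques are exactly the stars
   of the vertices of degree ω, and counting shows that every vertex is one. *)

Lemma card_set3 (X : finType) (x y z : X) : #|[set x; y; z]| <= 3.
Proof.
apply: leq_trans (leq_card_setU _ _) _; rewrite cards1 addn1 ltnS.
by apply: leq_trans (leq_card_setU _ _) _; rewrite !cards1.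
Qed.

Section FiniteSets.
Variable X : finType.
Implicit Types (A B K S : {set X}) (x y z : X).

Lemma exists_subset_card A k :
  k <= #|A| -> exists2 B : {set X}, B \subset A & #|B| = k.
Proof.
rewrite -bin_gt0 -cards_draws => /card_gt0P [B].
by rewrite inE => /andP [BA /eqP Bk]; exists B.
Qed.

Lemma exists_subset_card_mem A x k :
  x \in A -> 0 < k <= #|A| ->
  exists B : {set X}, [/\ x \in B, B \subset A & #|B| = k].
Proof.
move=> xA /andP [k_gt0 kA].
have [B BA Bk] : exists2 B : {set X}, B \subset A :\ x & #|B| = k.-1.
  by apply: exists_subset_card; rewrite (cardsD1 x) xA in kA; rewrite -ltnS prednK.
have xB : x \notin B by apply/negP => /(subsetP BA); rewrite !inE eqxx.
exists (x |: B); rewrite setU11 cardsU1 xB Bk add1n prednK //; split=> //.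
by rewrite subUset sub1set xA (subset_trans BA) // subD1set.
Qed.

Lemma setI_neq0_of_card A S K :
  S \subset A -> K \subset A -> #|A| < #|S| + #|K| -> S :&: K != set0.
Proof.
move=> SA KA; apply: contraTneq => SK0; rewrite -cardsUI SK0 cards0 addn0 -leqNgt.
by rewrite subset_leq_card // subUset SA KA.
Qed.

Lemma card_imset_setD1 A B : B \subset A -> #|[set A :\ b | b in B]| = #|B|.
Proof.
move=> /subsetP BA; apply: card_in_imset => b b' bB b'B eqAb.
apply/eqP; apply: contraT => bb'.
have : b \in A :\ b' by rewrite !inE bb' BA.
by rewrite -eqAb !inE eqxx.
Qed.

Lemma swap_inj K b b' y y' :
  b \in K -> y \notin K -> y' \notin K ->
  K :\ b :|: [set y] = K :\ b' :|: [set y'] -> b = b' /\ y = y'.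
Proof.
move=> bK yK y'K eqK.
have yy' : y = y'.
  have : y \in K :\ b' :|: [set y'] by rewrite -eqK !inE eqxx orbT.
  by rewrite !inE (negbTE yK) andbF => /eqP.
split=> //; apply/eqP; apply: contraT => bb'.
have : b \in K :\ b :|: [set y] by rewrite eqK !inE bb' bK.
by rewrite !inE eqxx /= => /eqP byE; rewrite -byE bK in yK.
Qed.

Lemma card_swap K b y : b \in K -> y \notin K -> #|K :\ b :|: [set y]| = #|K|.
Proof.
move=> bK yK; rewrite setUC cardsU1 !inE (negbTE yK) andbF add1n.
by rewrite [#|K|](cardsD1 b) bK.
Qed.

Lemma card2_set2 A x y :
  #|A| = 2 -> x != y -> x \in A -> y \in A -> A = [set x; y].
Proof.
move=> A2 xy xA yA; apply/esym/eqP; rewrite eqEcard A2 cards2 xy leqnn andbT.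
by apply/subsetP => z; rewrite !inE => /orP [] /eqP ->.
Qed.

Lemma card2_meet_set2 A x y z :
  #|A| = 2 -> x \in A -> x != y -> x != z -> A :&: [set y; z] != set0 ->
  A = [set x; y] \/ A = [set x; z].
Proof.
move=> A2 xA xy xz /set0Pn [t]; rewrite !inE => /andP [tA /orP [] /eqP tE]; subst t.
  by left; apply: card2_set2.
by right; apply: card2_set2.
Qed.

Lemma meeting_pairs_common_point (F : {set {set X}}) :
  {in F, forall A, #|A| = 2} -> {in F &, forall A B, A :&: B != set0} ->
  3 < #|F| -> exists c, {in F, forall A, c \in A}.
Proof.
move=> F2 meetF F_gt3.
have [A AF] : exists A, A \in F by apply/card_gt0P; apply: leq_trans F_gt3.
have /cards2P [x [y [xy defA]]] : #|A| == 2 by rewrite F2.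
have [Fx|/forall_inPn [B BF xB]] := boolP [forall (B | B \in F), x \in B].
  by exists x => B /(forall_inP Fx).
have [Fy|/forall_inPn [C CF yC]] := boolP [forall (C | C \in F), y \in C].
  by exists y => C /(forall_inP Fy).
(* Then A, B, C are the sides of a triangle xyz, and every pair meeting all
   three sides is one of them, so #|F| <= 3. *)
have yB : y \in B.
  case/set0Pn: (meetF A B AF BF) => t; rewrite inE defA !inE.
  by case/andP => /orP [] /eqP -> //; rewrite (negbTE xB).
have xC : x \in C.
  case/set0Pn: (meetF A C AF CF) => t; rewrite inE defA !inE.
  by case/andP => /orP [] /eqP -> //; rewrite (negbTE yC).
case/set0Pn: (meetF B C BF CF) => z; rewrite inE => /andP [zB zC].
have xz : x != z by apply: contraNneq xB => ->.
have yz : y != z by apply: contraNneq yC => ->.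
have defB : B = [set y; z] := card2_set2 (F2 B BF) yz yB zB.
have defC : C = [set x; z] := card2_set2 (F2 C CF) xz xC zC.
suff /subset_leq_card : F \subset [set A; B; C].
  by move/leq_trans/(_ (card_set3 A B C)); rewrite leqNgt F_gt3.
apply/subsetP => D DF; have D2 := F2 D DF.
case/set0Pn: (meetF D A DF AF) => t; rewrite inE defA !inE.
case/andP=> tD /orP [] /eqP tE; rewrite {t}tE in tD.
  have := meetF D B DF BF; rewrite defB => /(card2_meet_set2 D2 tD xy xz).
  by case=> ->; rewrite ?defA ?defC eqxx ?orbT.
rewrite eq_sym in xy.
have := meetF D C DF CF; rewrite defC => /(card2_meet_set2 D2 tD xy yz).
by case=> ->; rewrite ?defA ?defB ?[[set y; x]]setUC eqxx ?orbT.
Qed.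

End FiniteSets.

Section LineGraph.
Variables (T : finType) (e : rel T).
Hypotheses (e_sym : symmetric e) (e_irr : irreflexive e).

Lemma connected_closed_setT (Y : {set T}) :
  connected_graph e -> Y != set0 -> (forall y z, e y z -> y \in Y -> z \in Y) ->
  Y = setT.
Proof.
move=> e_conn /set0Pn [y0 y0Y] Ycl; apply/setP => v; rewrite inE.
by rewrite -(closed_connect (intro_closed (sym_connect_sym e_sym) Ycl) (e_conn y0 v)).
Qed.

Definition star (v : T) : {set line_vertex e} :=
  [set a : line_vertex e | v \in val a].

Definition deg (v : T) : nat := #|[set y | e v y]|.

Lemma line_vertex_set2 (a : line_vertex e) : exists x y, e x y /\ val a = [set x; y].
Proof.
by case: a => A /= /existsP [x /existsP [y /andP [exy /eqP ->]]]; exists x, y.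
Qed.

Lemma edge_neq x y : e x y -> x != y.
Proof. by apply: contraTneq => ->; rewrite e_irr. Qed.

Lemma card_line_vertex (a : line_vertex e) : #|val a| = 2.
Proof. by have [x [y [/edge_neq xy ->]]] := line_vertex_set2 a; rewrite cards2 xy. Qed.

Lemma line_vertex_of_edge x y :
  e x y -> exists a : line_vertex e, val a = [set x; y].
Proof.
move=> exy; have exyA : is_edge e [set x; y].
  by apply/existsP; exists x; apply/existsP; exists y; rewrite exy eqxx.
by exists (exist (is_edge e) _ exyA).
Qed.

Lemma starP v (a : line_vertex e) :
  reflect (exists2 y, e v y & val a = [set v; y]) (a \in star v).
Proof.
rewrite inE; apply: (iffP idP) => [|[y _ ->]]; last by rewrite !inE eqxx.
have [x [y [exy ->]]] := line_vertex_set2 a; rewrite !inE => /orP [] /eqP ->.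
  by exists y.
by exists x; rewrite 1?e_sym // setUC.
Qed.

Lemma line_vertex_edge (a : line_vertex e) x y :
  x != y -> x \in val a -> y \in val a -> e x y.
Proof.
move=> xy xa ya; have /starP [z exz az] : a \in star x by rewrite inE.
by move: ya xy; rewrite az !inE => /orP [] /eqP ->; rewrite ?eqxx.
Qed.

Lemma line_vertex_eq (a b : line_vertex e) x y :
  x != y -> x \in val a -> y \in val a -> x \in val b -> y \in val b -> a = b.
Proof.
move=> xy xa ya xb yb; apply: val_inj.
rewrite (card2_set2 (card_line_vertex a) xy xa ya).
by rewrite (card2_set2 (card_line_vertex b) xy xb yb).
Qed.

Lemma card_star v : #|star v| = deg v.
Proof.
rewrite -(card_imset _ val_inj) /deg.
rewrite -(card_in_imset (f := fun y => [set v; y]) (D := [set y | e v y])).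
  apply: eq_card => A; apply/imsetP/imsetP => [[a /starP [y evy ->] ->]|].
    by exists y; rewrite ?inE.
  case=> y; rewrite inE => evy ->; have [a av] := line_vertex_of_edge evy.
  by exists a; rewrite ?av //; apply/starP; exists y.
move=> y y'; rewrite !inE => /edge_neq vy _ eqvy.
have : y \in [set v; y'] by rewrite -eqvy !inE eqxx orbT.
by rewrite !inE eq_sym (negbTE vy) => /eqP.
Qed.

Lemma card_starI x y : x != y -> #|star x :&: star y| <= 1.
Proof.
move=> xy; apply/card_le1_eqP => a b; rewrite !inE => /andP [xa ya] /andP [xb yb].
exact/esym/(line_vertex_eq xy xa ya xb yb).
Qed.

Lemma sub_starI_eq (S : {set line_vertex e}) x y :
  1 < #|S| -> S \subset star x -> S \subset star y -> x = y.
Proof.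
move=> S_gt1 Sx Sy; apply/eqP; apply: contraLR S_gt1 => /card_starI; rewrite -leqNgt.
by apply: leq_trans; rewrite subset_leq_card // subsetI Sx Sy.
Qed.

Lemma starI_neq0 x y : x != y -> (star x :&: star y != set0) = e x y.
Proof.
move=> xy; apply/set0Pn/idP => [[a]|exy]; rewrite ?inE.
  by case/andP; apply: line_vertex_edge.
by have [a ax] := line_vertex_of_edge exy; exists a; rewrite !inE ax !inE !eqxx orbT.
Qed.

Lemma sub_star_clique v (S : {set line_vertex e}) :
  S \subset star v -> is_clique (line_adj e) S.
Proof.
move=> /subsetP Sv; apply/forall_inP => a aS; apply/forall_inP => b bS.
apply/implyP => ab; rewrite /line_adj ab; apply/set0Pn; exists v.
by rewrite inE; move: (Sv a aS) (Sv b bS); rewrite !inE => -> ->.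
Qed.

Lemma clique_sub_star (S : {set line_vertex e}) :
  is_clique (line_adj e) S -> 3 < #|S| -> exists v, S \subset star v.
Proof.
move=> /forall_inP clS S_gt3.
have [|||v Sv] := @meeting_pairs_common_point _ (val @: S).
- by move=> _ /imsetP [a _ ->]; apply: card_line_vertex.
- move=> _ _ /imsetP [a aS ->] /imsetP [b bS ->].
  have [<-|ab] := eqVneq a b; first by rewrite setIid -card_gt0 card_line_vertex.
  by have /forall_inP/(_ b bS)/implyP/(_ ab)/andP [] := clS a aS.
- by rewrite card_imset //; apply: val_inj.
by exists v; apply/subsetP => a aS; rewrite inE Sv ?imset_f.
Qed.

Section CliqueGraph.
Variable w : nat.
Hypothesis w_gt3 : 3 < w.

Let w_gt1 : 1 < w := ltnW (ltnW w_gt3).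

Definition wclique (S : {set line_vertex e}) : bool :=
  is_clique (line_adj e) S && (#|S| == w).

Definition wclique_of (S : {set line_vertex e}) (clS : wclique S) :
  clique_vertex (line_adj e) w := exist _ S clS.

Definition adjacent_wclique (K S : {set line_vertex e}) : bool :=
  [&& wclique S, S != K & S :&: K != set0].

Lemma sub_star_wclique v (S : {set line_vertex e}) :
  S \subset star v -> #|S| = w -> wclique S.
Proof. by move=> Sv Sw; rewrite /wclique (sub_star_clique Sv) Sw eqxx. Qed.

Lemma wclique_star (S : {set line_vertex e}) :
  (forall u, deg u <= w) -> wclique S -> exists2 v, deg v = w & S = star v.
Proof.
move=> deg_w /andP [clS /eqP Sw].
have [v Sv] : exists v, S \subset star v by apply: clique_sub_star; rewrite ?Sw.
exists v; last by apply/eqP; rewrite eqEcard Sv card_star Sw deg_w.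
by apply/eqP; rewrite eqn_leq deg_w -Sw -card_star subset_leq_card.
Qed.

Lemma regular_clique_graph_iso :
  regular e w -> graph_iso (clique_adj (line_adj e) w) e.
Proof.
move=> e_reg; have deg_w u : deg u <= w by rewrite [deg u]e_reg.
have star_w v : wclique (star v).
  by apply: (sub_star_wclique (subxx _)); rewrite card_star [deg v]e_reg.
pose g v := wclique_of (star_w v).
have g_inj : injective g.
  move=> u v /(congr1 val) /= eq_star; apply: (sub_starI_eq (S := star u)) => //.
    by rewrite card_star [deg u]e_reg.
  by rewrite eq_star.
have g_adj u v : clique_adj (line_adj e) w (g u) (g v) = e u v.
  have [<-|uv] := eqVneq u v; first by rewrite /clique_adj eqxx e_irr.
  by rewrite /clique_adj (inj_eq g_inj) uv starI_neq0.
have g_onto : [set: clique_vertex (line_adj e) w] \subset g @: T.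
  apply/subsetP => k _; have [v _ kv] := wclique_star deg_w (valP k).
  by apply/imsetP; exists v => //; apply: val_inj.
have [f gK fK] : bijective g.
  apply: (inj_card_bij g_inj); rewrite -cardsT.
  exact: leq_trans (subset_leq_card g_onto) (leq_imset_card _ _).
by exists f; split=> [|k k']; [exists g | rewrite -g_adj !fK].
Qed.

Lemma card_wclique_family (F : {set {set line_vertex e}}) :
  {in F, forall S, wclique S} ->
  #|[set k : clique_vertex (line_adj e) w | val k \in F]| = #|F|.
Proof.
move=> Fw; rewrite -(card_imset _ val_inj); apply: eq_card => S.
apply/imsetP/idP => [[k kF ->]|SF]; first by rewrite inE in kF.
by exists (wclique_of (Fw S SF)); rewrite ?inE.
Qed.

Lemma card_star_setD1 v b : deg v = w.+1 -> b \in star v -> #|star v :\ b| = w.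
Proof. by move=> dv bv; have := cardsD1 b (star v); rewrite bv card_star dv => -[]. Qed.

Lemma star_setD1_wclique v b : deg v = w.+1 -> b \in star v -> wclique (star v :\ b).
Proof.
by move=> dv bv; apply: sub_star_wclique (subD1set _ _) (card_star_setD1 dv bv).
Qed.

Lemma star_setD1_meet v b b' : deg v = w.+1 -> b \in star v -> b' \in star v ->
  (star v :\ b) :&: (star v :\ b') != set0.
Proof.
move=> dv bv b'v; apply: setI_neq0_of_card (subD1set _ _) (subD1set _ _) _.
by rewrite (card_star_setD1 dv bv) (card_star_setD1 dv b'v) card_star dv; lia.
Qed.

Lemma adjacent_wclique_swap u (K : {set line_vertex e}) b a :
  K \subset star u -> #|K| = w -> b \in K -> a \in star u :\: K ->
  adjacent_wclique K (K :\ b :|: [set a]).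
Proof.
move=> Ku Kw bK /setDP [au aK]; apply/and3P; split.
- apply: (sub_star_wclique (v := u)); last by rewrite card_swap.
  by rewrite subUset sub1set au (subset_trans (subD1set K b)).
- by apply: contraNneq aK => <-; rewrite !inE eqxx orbT.
- have [c cKb] : exists c, c \in K :\ b.
    by apply/card_gt0P; move: w_gt1; rewrite -Kw (cardsD1 b) bK.
  by apply/set0Pn; exists c; move: cKb; rewrite !inE => /andP [-> ->].
Qed.

Lemma adjacent_wclique_star_setD1 y x0 b :
  deg y = w.+1 -> x0 \in star y -> b \in star y :\ x0 ->
  adjacent_wclique (star y :\ x0) (star y :\ b).
Proof.
move=> dy x0y /setD1P [bx0 by0]; apply/and3P; split.
- exact: star_setD1_wclique.
- apply: contraTneq (_ : x0 \in star y :\ b) => [->|]; first by rewrite !inE eqxx.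
  by rewrite in_setD1 x0y andbT eq_sym.
- exact: star_setD1_meet.
Qed.

Lemma adjacent_wclique_through y x0 u a :
  y != u -> a \in star u -> a \in star y :\ x0 -> w <= deg u ->
  exists C : {set line_vertex e},
    [/\ C \subset star u, ~~ (C \subset star y) & adjacent_wclique (star y :\ x0) C].
Proof.
move=> yu au ayx0 du; have [|C [aC Cu Cw]] := exists_subset_card_mem au (k := w).
  by rewrite card_star du ltnW.
have Cy : ~~ (C \subset star y).
  by apply/negP => /(sub_starI_eq _ Cu) uy; rewrite uy ?eqxx ?Cw in yu.
exists C; split=> //; apply/and3P; split; first exact: sub_star_wclique Cu Cw.
  by apply: contraNneq Cy => ->; apply: subD1set.
by apply/set0Pn; exists a; rewrite in_setI aC.
Qed.

Section Isomorphism.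

Variable f : clique_vertex (line_adj e) w -> T.
Hypotheses (f_bij : bijective f)
  (f_adj : forall k k', e (f k) (f k') = clique_adj (line_adj e) w k k').

Lemma card_adj_le_deg k (X : {set clique_vertex (line_adj e) w}) :
  {in X, forall k', clique_adj (line_adj e) w k k'} -> #|X| <= deg (f k).
Proof.
move=> Xk; rewrite -(card_imset _ (bij_inj f_bij)); apply: subset_leq_card.
by apply/subsetP => _ /imsetP [k' k'X ->]; rewrite inE f_adj Xk.
Qed.

Lemma card_adjacent_le_deg k (F : {set {set line_vertex e}}) :
  {in F, forall S, adjacent_wclique (val k) S} -> #|F| <= deg (f k).
Proof.
move=> Fk; rewrite -card_wclique_family => [|S /Fk /and3P [] //].
apply: card_adj_le_deg => k'; rewrite inE => /Fk /and3P [_ k'k k'meet].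
by rewrite /clique_adj setIC k'meet andbT; apply: contraNneq k'k => ->.
Qed.

Lemma deg_le_succ v : deg v <= w.+1.
Proof.
case: (@arg_maxnP T v predT deg isT) => u _ u_max.
apply: leq_trans (u_max v isT) _; rewrite leqNgt; apply/negP => du.
have [K Ku Kw] : exists2 K : {set line_vertex e}, K \subset star u & #|K| = w.
  by apply: exists_subset_card; rewrite card_star ltnW // ltnW.
pose k := wclique_of (sub_star_wclique Ku Kw).
pose swap p := K :\ p.1 :|: [set p.2].
have swap_in_inj : {in setX K (star u :\: K) &, injective swap}.
  move=> [b a] [b' a']; rewrite !inE /=.
  move=> /andP [bK /andP [aK _]] /andP [_ /andP [a'K _]].
  by move=> /(swap_inj bK aK a'K) [-> ->].
have swap_adj : {in swap @: setX K (star u :\: K), forall S, adjacent_wclique K S}.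
  move=> _ /imsetP [[b a] /setXP [bK aKu] ->].
  exact: adjacent_wclique_swap Ku Kw bK aKu.
have := leq_trans (card_adjacent_le_deg (k := k) swap_adj) (u_max (f k) isT).
rewrite card_in_imset // cardsX cardsDS // Kw card_star.
by move: du w_gt3; clear; nia.
Qed.

Lemma deg_le_of_heavy_neighbours y u1 u2 :
  u1 != u2 -> e y u1 -> e y u2 -> w <= deg u1 -> w <= deg u2 -> deg y <= w.
Proof.
move=> u12 eyu1 eyu2 du1 du2; have := deg_le_succ y.
rewrite leq_eqVlt ltnS => /orP [/eqP dy|//]; exfalso.
have [a1 a1E] := line_vertex_of_edge eyu1.
have [a2 a2E] := line_vertex_of_edge eyu2.
have [x0 x0y] : exists2 x0, x0 \in star y & x0 \notin [set a1; a2].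
  apply/subsetPn; apply: contraTN w_gt1 => /subset_leq_card.
  by rewrite card_star dy cards2 ltnS -leqNgt => /leq_trans; apply; apply: leq_b1.
rewrite !inE negb_or => /andP [x0a1 x0a2].
have a1u1 : a1 \in star u1 by rewrite inE a1E !inE eqxx orbT.
have a2u2 : a2 \in star u2 by rewrite inE a2E !inE eqxx orbT.
have a1y : a1 \in star y :\ x0 by rewrite in_setD1 eq_sym x0a1 inE a1E !inE eqxx.
have a2y : a2 \in star y :\ x0 by rewrite in_setD1 eq_sym x0a2 inE a2E !inE eqxx.
have [C1 [C1u1 C1y adjC1]] := adjacent_wclique_through (edge_neq eyu1) a1u1 a1y du1.
have [C2 [C2u2 C2y adjC2]] := adjacent_wclique_through (edge_neq eyu2) a2u2 a2y du2.
pose F1 := [set star y :\ b | b in star y :\ x0].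
have F1y S : S \in F1 -> S \subset star y by case/imsetP => b _ ->; apply: subD1set.
have C12 : C1 != C2.
  apply: contra_neq u12 => C12; apply: (sub_starI_eq _ C1u1); last by rewrite C12.
  by case/and3P: adjC1 => /andP [_ /eqP ->].
have cardF : #|C2 |: (C1 |: F1)| = w.+2.
  rewrite !cardsU1 card_imset_setD1 ?subD1set // (card_star_setD1 dy x0y).
  by rewrite in_setU1 negb_or eq_sym C12 !(contra (F1y _)).
have adjF : {in C2 |: (C1 |: F1), forall S, adjacent_wclique (star y :\ x0) S}.
  move=> S; rewrite !in_setU1 => /or3P [/eqP -> | /eqP -> | /imsetP [b bK ->]] //.
  exact: adjacent_wclique_star_setD1.
have := card_adjacent_le_deg (k := wclique_of (star_setD1_wclique dy x0y)) adjF.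
by rewrite cardF => /leq_trans/(_ (deg_le_succ _)); rewrite ltnn.
Qed.

Lemma deg_succ_clique v : deg v = w.+1 ->
  exists2 Y : {set T}, #|Y| = w.+1 & {in Y &, forall y z, y != z -> e y z}.
Proof.
move=> dv; pose G := [set star v :\ b | b in star v].
have Gcl : {in G, forall S, wclique S}.
  by move=> _ /imsetP [b bv ->]; apply: star_setD1_wclique.
exists (f @: [set k : clique_vertex (line_adj e) w | val k \in G]).
  rewrite card_imset ?card_wclique_family ?card_imset_setD1 ?card_star //.
  exact: bij_inj.
move=> _ _ /imsetP [k kG ->] /imsetP [k' k'G ->] fkk'.
have kk' : k != k' by apply: contra_neq fkk' => ->.
rewrite f_adj /clique_adj kk' /=; move: kG k'G; rewrite !inE.
by move=> /imsetP [b bv ->] /imsetP [b' b'v ->]; apply: star_setD1_meet.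
Qed.

Lemma deg_le : connected_graph e -> forall v, deg v <= w.
Proof.
move=> e_conn v; have := deg_le_succ v.
rewrite leq_eqVlt ltnS => /orP [/eqP dv|//]; exfalso.
have [Y cardY Y_adj] := deg_succ_clique dv.
have cardYy y : y \in Y -> #|Y :\ y| = w.
  by move=> yY; have := cardsD1 y Y; rewrite yY cardY => -[].
have Y_nbhd y : y \in Y -> Y :\ y \subset [set z | e y z].
  move=> yY; apply/subsetP => z; rewrite !inE => /andP [zy zY].
  by apply: Y_adj; rewrite // eq_sym.
have deg_ge y : y \in Y -> w <= deg y.
  by move=> yY; rewrite -(cardYy y yY); apply: subset_leq_card (Y_nbhd y yY).
have nbhdE y : y \in Y -> [set z | e y z] = Y :\ y.
  move=> yY; apply/esym/eqP; rewrite eqEcard Y_nbhd // cardYy //.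
  have : 1 < #|Y :\ y| by rewrite cardYy.
  case/card_gt1P => u1 [u2 [u1Yy u2Yy u12]].
  have /setD1P [_ u1Y] := u1Yy; have /setD1P [_ u2Y] := u2Yy.
  have /subsetP Ny := Y_nbhd y yY.
  have eyu1 : e y u1 by have := Ny u1 u1Yy; rewrite inE.
  have eyu2 : e y u2 by have := Ny u2 u2Yy; rewrite inE.
  exact: deg_le_of_heavy_neighbours u12 eyu1 eyu2 (deg_ge u1 u1Y) (deg_ge u2 u2Y).
have vY : v \in Y.
  rewrite (@connected_closed_setT Y e_conn) ?inE -?card_gt0 ?cardY // => y z eyz yY.
  by move: (nbhdE y yY) => /setP/(_ z); rewrite !inE eyz => /esym/andP [].
have : deg v = #|Y :\ v| by rewrite /deg nbhdE.
by rewrite cardYy // dv; lia.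
Qed.
Lemma regular_of_clique_graph_iso : connected_graph e -> regular e w.
Proof.
move=> e_conn; pose D := [set v | deg v == w].
have wcliques_stars : val @: [set: clique_vertex (line_adj e) w] \subset star @: D.
  apply/subsetP => _ /imsetP [k _ ->].
  have [v dv ->] := wclique_star (deg_le e_conn) (valP k).
  by apply: imset_f; rewrite inE dv.
have : #|T| <= #|D|.
  rewrite -(bij_eq_card f_bij) -cardsT -(card_imset _ val_inj).
  exact: leq_trans (subset_leq_card wcliques_stars) (leq_imset_card _ _).
rewrite -cardsT => TD; have DT : D = setT by apply/eqP; rewrite eqEcard subsetT.
move=> v; have : v \in D by rewrite DT inE.
by rewrite inE => /eqP.
Qed.

End Isomorphism.

End CliqueGraph.

End LineGraph.

Unset Implicit Arguments.

Theorem theorem5 (w : nat) (T : finType) (e : rel T) :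
  4 <= w ->
  simple_graph e ->
  connected_graph e ->
  graph_iso (clique_adj (line_adj e) w) e <-> regular e w.
Proof.
move=> w_gt3 [e_sym e_irr] e_conn; split; last exact: regular_clique_graph_iso.
by case=> f [f_bij f_adj]; apply: regular_of_clique_graph_iso f_bij f_adj e_conn.
Qed.
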